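(* Let $M$ be an infinite subset of $\mathbb{N}$ and let $k,l\in\mathbb{N}$. For every finite partition $\mathrm{Plm}_l([M]^k)=\bigcup_{j=1}^p P_j$ there exist an infinite $L\subseteq M$ and $1\le j_0\le p$ such that $\mathrm{Plm}_l([L]^k)\subseteq P_{j_0}$.
   Context: For $M\subseteq\mathbb{N}$ infinite and $k\in\mathbb{N}$, $[M]^k$ is the set of $k$-element subsets of $M$; an element $s\in[M]^k$ is identified with its increasing enumeration $s(1)<\dots<s(k)$. A finite sequence $(s_j)_{j=1}^l$ in $[M]^k$ is a plegma family if (i) for every $1\le i\le k$, $s_1(i)<s_2(i)<\dots<s_l(i)$, and (ii) for every $1\le i<k$, $s_l(i)<s_1(i+1)$. $\mathrm{Plm}_l([M]^k)$ denotes the set of all plegma families of length $l$ in $[M]^k$. *)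

From mathcomp Require Import all_boot.
Set Implicit Arguments. Unset Strict Implicit. Unset Printing Implicit Defensive.

Definition infinite_set (M : nat -> Prop) : Prop :=
  forall n : nat, exists m : nat, n <= m /\ M m.

Definition subset_of (L M : nat -> Prop) : Prop := forall x, L x -> M x.

(* s \in [M]^k, s given by its increasing enumeration s(1)<...<s(k)
   (0-indexed here: nth 0 s 0 < ... < nth 0 s (k-1)). *)
Definition in_ksubsets (M : nat -> Prop) (k : nat) (s : seq nat) : Prop :=
  size s = k /\ sorted ltn s /\ (forall x, x \in s -> M x).

(* (s_j)_{j=1}^l is a plegma family in [M]^k; F = [:: s_1; ...; s_l]
   (0-indexed: s_{j+1} = nth [::] F j, s(i+1) = nth 0 s i). *)
Definition plegma (M : nat -> Prop) (k l : nat) (F : seq (seq nat)) : Prop :=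
  size F = l /\
  (forall s, s \in F -> in_ksubsets M k s) /\
  (forall i j, i < k -> j.+1 < l ->
     nth 0 (nth [::] F j) i < nth 0 (nth [::] F j.+1) i) /\
  (forall i, i.+1 < k -> 0 < l ->
     nth 0 (nth [::] F l.-1) i < nth 0 (nth [::] F 0) i.+1).

(* A plegma family (s_1, ..., s_l) in [M]^k interleaves its members: listing
   s_1(1), ..., s_l(1), s_1(2), ..., s_l(2), ..., s_1(k), ..., s_l(k) gives a
   strictly increasing sequence, i.e. an element of [M]^(k*l); conversely every
   u in [M]^(k*l) is read back as the plegma family s_j(i) = u(i*l + j).  These
   two maps are mutually inverse on plegma families (0-indexed), so a finite
   colouring of Plm_l([M]^k) is a finite colouring of [M]^(k*l), and the theorem
   is the infinite Ramsey theorem for (k*l)-sets. *)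

From mathcomp Require Import all_boot zify.
From Stdlib Require Import ClassicalEpsilon Classical.
Set Implicit Arguments. Unset Strict Implicit. Unset Printing Implicit Defensive.

Lemma infinite_pigeonhole (p N : nat) (f : nat -> nat) :
  (forall i, N <= i -> f i < p) ->
  exists2 j0, j0 < p & forall n, exists i, n <= i /\ f i = j0.
Proof.
elim: p N => [|p IH] N fN; first by have := fN N (leqnn N).
case: (classic (forall n, exists i, n <= i /\ f i = p)) => [|/not_all_ex_not [n p_late]].
  by exists p.
have [|j0 lt_j0p j0_inf] := IH (maxn N n); last by exists j0 => //; lia.
move=> i le_i; have := fN i ltac:(lia).
have : f i <> p by move=> fip; apply: p_late; exists i; split => //; lia.
lia.
Qed.

Lemma dependent_choice (T : Type) (Good : T -> Prop) (R : T -> T -> Prop)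
    (x0 : T) :
  Good x0 -> (forall x, Good x -> exists y, Good y /\ R x y) ->
  exists f : nat -> T, f 0 = x0 /\ forall i, Good (f i) /\ R (f i) (f i.+1).
Proof.
move=> good_x0 extend.
pose next (x : {x | Good x}) : {x | Good x} :=
  let: exist y Hy := constructive_indefinite_description _ (extend _ (proj2_sig x))
  in exist _ y (proj1 Hy).
have next_rel x : R (proj1_sig x) (proj1_sig (next x)).
  by rewrite /next; case: constructive_indefinite_description => y [].
exists (fun i => proj1_sig (iter i next (exist _ x0 good_x0))).
by split => // i; split; [exact: proj2_sig | exact: next_rel].
Qed.

Definition above (M : nat -> Prop) (a : nat) : nat -> Prop := fun x => M x /\ a < x.

Lemma infinite_above (M : nat -> Prop) (a : nat) :
  infinite_set M -> infinite_set (above M a).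
Proof.
move=> M_inf n; have [y [le_y My]] := M_inf (maxn n a.+1).
by exists y; split; [lia | split => //; lia].
Qed.

Lemma in_ksubsets_sub (A B : nat -> Prop) (n : nat) (s : seq nat) :
  subset_of A B -> in_ksubsets A n s -> in_ksubsets B n s.
Proof. by move=> AB [sz [srt memA]]; split=> //; split=> // x /memA /AB. Qed.

Lemma in_ksubsets_cons (P : nat -> Prop) (n a : nat) (t : seq nat) :
  in_ksubsets P n.+1 (a :: t) <-> P a /\ in_ksubsets (above P a) n t.
Proof.
rewrite /in_ksubsets /= (path_sortedE ltn_trans); split.
  move=> [[sz] [/andP [/allP gt_a srt] memP]].
  split; first by apply: memP; rewrite inE eqxx.
  split=> //; split=> // x xt.
  by split; [apply: memP; rewrite inE xt orbT | exact: gt_a].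
move=> [Pa [sz [srt memP]]]; split; first by rewrite sz.
split; first by rewrite srt andbT; apply/allP => x /memP [].
by move=> x; rewrite inE => /orP [/eqP -> | /memP []].
Qed.

Definition ramsey_property (p n : nat) : Prop :=
  forall (M : nat -> Prop) (c : seq nat -> nat),
  infinite_set M -> (forall s, in_ksubsets M n s -> c s < p) ->
  exists L j0, infinite_set L /\ subset_of L M /\ j0 < p /\
    (forall s, in_ksubsets L n s -> c s = j0).

Lemma ramsey0 (p : nat) : ramsey_property p 0.
Proof.
move=> M c M_inf c_lt; exists M, (c [::]); do !split => //.
  by apply: c_lt.
by move=> s [/size0nil ->].
Qed.

(* A stage of the construction: a chosen head, its colour, and the infinite
   set from which the next heads are drawn. *)
Record stage := Stage { head : nat; colour : nat; rest : nat -> Prop }.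

Section RamseyInduction.
Variables (p n : nat) (M0 : nat -> Prop) (c : seq nat -> nat).
Hypothesis ramsey_n : ramsey_property p n.
Hypothesis M0_inf : infinite_set M0.
Hypothesis c_lt : forall s, in_ksubsets M0 n.+1 s -> c s < p.

Definition admissible (x : stage) : Prop :=
  infinite_set (rest x) /\ subset_of (rest x) M0.

Definition refines (x y : stage) : Prop :=
  rest x (head y) /\ subset_of (rest y) (above (rest x) (head y)) /\
  colour y < p /\ forall t, in_ksubsets (rest y) n t -> c (head y :: t) = colour y.

(* One step: pick any head a in rest x and apply Ramsey for n-sets to the
   colouring t |-> c (a :: t) of the n-sets of rest x above a. *)
Lemma refine_step (x : stage) :
  admissible x -> exists y, admissible y /\ refines x y.
Proof.
move=> [rest_inf rest_sub]; have [a [_ rest_a]] := rest_inf 0.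
have c_lt_a t : in_ksubsets (above (rest x) a) n t -> c (a :: t) < p.
  by move=> t_ks; apply/c_lt/(in_ksubsets_sub rest_sub)/in_ksubsets_cons.
have [L [j [L_inf [L_sub [lt_jp L_hom]]]]] :=
  ramsey_n (infinite_above a rest_inf) c_lt_a.
exists (Stage a j L); split; last by split.
by split=> // y /L_sub [/rest_sub].
Qed.

(* Iterating refine_step gives heads a_0 < a_1 < ... with colours col_i and
   sets D_0 = M0 ⊇ D_1 ⊇ ...; a colour j0 taken infinitely often yields the
   homogeneous set {a_i | col_i = j0}, as every (n+1)-set of it is a_i
   followed by later heads, all lying in D_(i+1). *)
Lemma ramsey_succ_homogeneous :
  exists L j0, infinite_set L /\ subset_of L M0 /\ j0 < p /\
    (forall s, in_ksubsets L n.+1 s -> c s = j0).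
Proof.
have adm0 : admissible (Stage 0 0 M0) by split.
have [f [f0 f_chain]] := dependent_choice adm0 refine_step.
pose D i := rest (f i); pose a i := head (f i.+1); pose col i := colour (f i.+1).
have D_step i : subset_of (D i.+1) (above (D i) (a i)) by have [_ [_ []]] := f_chain i.
have D_dec : {homo D : i j / i <= j >-> subset_of j i}.
  by apply: homo_leq => [A x //|B A C AB BC x /BC /AB|i x /D_step []].
have a_in i : D i (a i) by have [_ []] := f_chain i.
have a_mono : {mono a : i j / i < j}.
  apply/leqW_mono/leq_mono; apply: homo_ltn => [y x z|i]; first exact: ltn_trans.
  by case: (D_step i _ (a_in i.+1)).
have a_ge i : i <= a i.
  by elim: i => // i IHi; apply: leq_ltn_trans IHi _; rewrite a_mono.
have col_lt i : col i < p by have [_ [_ [_ []]]] := f_chain i.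
have col_hom i t : in_ksubsets (D i.+1) n t -> c (a i :: t) = col i.
  by have [_ [_ [_ [_ hom]]]] := f_chain i; apply: hom.
have [j0 lt_j0p j0_inf] := infinite_pigeonhole (N := 0) (fun i _ => col_lt i).
exists (fun x => exists i, x = a i /\ col i = j0), j0; do !split => //.
- move=> m; have [i [le_mi coli]] := j0_inf m.
  by exists (a i); split; [exact: leq_trans (a_ge i) | exists i].
- have DM0 i : subset_of (D i) M0.
    by move=> x /(D_dec 0 i (leq0n i)); rewrite /D f0.
  by move=> x [i [-> _]]; apply: (DM0 i).
- case=> [[//]|_ t] /in_ksubsets_cons [[i [-> coli]] t_ks].
  rewrite col_hom ?coli //; apply: in_ksubsets_sub t_ks.
  move=> _ [[j [-> _]] lt_aij]; rewrite a_mono in lt_aij.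
  exact: D_dec lt_aij _ (a_in j).
Qed.

End RamseyInduction.

Theorem ramsey (p n : nat) : ramsey_property p n.
Proof.
elim: n => [|n IH]; first exact: ramsey0.
by move=> M c; apply: ramsey_succ_homogeneous.
Qed.

Definition plegma_of_set (k l : nat) (u : seq nat) : seq (seq nat) :=
  mkseq (fun j => mkseq (fun i => nth 0 u (i * l + j)) k) l.

Definition set_of_plegma (k l : nat) (F : seq (seq nat)) : seq nat :=
  mkseq (fun m => nth 0 (nth [::] F (m %% l)) (m %/ l)) (k * l).

Lemma interleave_index_lt (k l i j : nat) : i < k -> j < l -> i * l + j < k * l.
Proof. by move=> lt_ik lt_jl; nia. Qed.

Lemma interleave_index_decomp (k l m : nat) :
  m < k * l -> exists i j, [/\ i < k, j < l & m = i * l + j].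
Proof.
move=> lt_m; have l_gt0 : 0 < l by nia.
exists (m %/ l), (m %% l); split; [by rewrite ltn_divLR | by rewrite ltn_mod |].
exact: divn_eq.
Qed.

Lemma sorted_nth_lt (u : seq nat) (a b : nat) :
  sorted ltn u -> a < b -> b < size u -> nth 0 u a < nth 0 u b.
Proof.
move=> srt lt_ab lt_b; apply: (sorted_ltn_nth ltn_trans) => //; rewrite inE /=; lia.
Qed.

Lemma nth_plegma_of_set (k l i j : nat) (u : seq nat) : i < k -> j < l ->
  nth 0 (nth [::] (plegma_of_set k l u) j) i = nth 0 u (i * l + j).
Proof. by move=> lt_ik lt_jl; rewrite /plegma_of_set !nth_mkseq. Qed.

Lemma nth_set_of_plegma (k l i j : nat) (F : seq (seq nat)) : i < k -> j < l ->
  nth 0 (set_of_plegma k l F) (i * l + j) = nth 0 (nth [::] F j) i.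
Proof.
move=> lt_ik lt_jl; rewrite /set_of_plegma nth_mkseq ?interleave_index_lt //.
rewrite modnMDl modn_small // divnMDl ?divn_small ?addn0 //; lia.
Qed.

(* Every (k*l)-set of M reads as a plegma family in [M]^k: both conditions (i)
   and (ii) compare entries at increasing positions of u. *)
Lemma plegma_of_set_plegma (M : nat -> Prop) (k l : nat) (u : seq nat) :
  in_ksubsets M (k * l) u -> plegma M k l (plegma_of_set k l u).
Proof.
move=> [sz [srt memM]].
have u_lt a i j : a < i * l + j -> i < k -> j < l -> nth 0 u a < nth 0 u (i * l + j).
  by move=> lt_a lt_ik lt_jl; apply: sorted_nth_lt; rewrite ?sz ?interleave_index_lt.
split; first by rewrite size_mkseq.
split.
  move=> s /(nthP [::]) [j]; rewrite size_mkseq => lt_jl <-.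
  rewrite /plegma_of_set nth_mkseq //; split; first by rewrite size_mkseq.
  split.
    apply/(sortedP 0) => i; rewrite size_mkseq => lt_ik.
    by rewrite !nth_mkseq; try lia; apply: u_lt => //; lia.
  move=> x /(nthP 0) [i]; rewrite size_mkseq => lt_ik <-.
  by rewrite nth_mkseq //; apply/memM/mem_nth; rewrite sz interleave_index_lt.
split=> [i j lt_ik lt_jl | i lt_ik l_gt0].
  by rewrite !nth_plegma_of_set //; try lia; apply: u_lt => //; lia.
by rewrite !nth_plegma_of_set //; try lia; apply: u_lt => //; nia.
Qed.

(* Conversely, interleaving a plegma family in [L]^k gives a (k*l)-set of L:
   consecutive positions are consecutive members of the family at the same
   index (condition (i)), or the last member at index i followed by the first
   at index i+1 (condition (ii)). *)
Lemma set_of_plegma_ksubset (L : nat -> Prop) (k l : nat) (F : seq (seq nat)) :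
  plegma L k l F -> in_ksubsets L (k * l) (set_of_plegma k l F).
Proof.
move=> [szF [Fks [cond_i cond_ii]]].
split; first by rewrite size_mkseq.
split.
  apply/(sortedP 0) => m; rewrite size_mkseq => lt_m.
  have [i [j [lt_ik lt_jl m_ij]]] := interleave_index_decomp (ltnW lt_m); subst m.
  rewrite nth_set_of_plegma //; case: (ltnP j.+1 l) => lt_j1.
    by rewrite -addnS nth_set_of_plegma //; apply: cond_i.
  have j_last : j = l.-1 by lia.
  have lt_i1 : i.+1 < k.
    by rewrite -(@ltn_pmul2r l) ?mulSn; lia.
  rewrite (_ : (i * l + j).+1 = i.+1 * l + 0); last by lia.
  by rewrite nth_set_of_plegma //; try lia; rewrite j_last; apply: cond_ii => //; lia.
move=> x /(nthP 0) [m]; rewrite size_mkseq => lt_m <-.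
have [i [j [lt_ik lt_jl ->]]] := interleave_index_decomp lt_m.
rewrite nth_set_of_plegma //.
have [szs [_ memL]] := Fks _ (mem_nth [::] (ltac:(by rewrite szF) : j < size F)).
by apply/memL/mem_nth; rewrite szs.
Qed.

Lemma set_of_plegmaK (L : nat -> Prop) (k l : nat) (F : seq (seq nat)) :
  plegma L k l F -> plegma_of_set k l (set_of_plegma k l F) = F.
Proof.
move=> [szF [Fks _]].
apply: (@eq_from_nth _ [::]) => [|j]; rewrite size_mkseq ?szF // => lt_jl.
have [szs _] := Fks _ (mem_nth [::] (ltac:(by rewrite szF) : j < size F)).
apply: (@eq_from_nth _ 0) => [|i]; rewrite /plegma_of_set nth_mkseq ?size_mkseq //.
by move=> lt_ik; rewrite nth_mkseq // nth_set_of_plegma.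
Qed.

Theorem mainTheorem1 (M : nat -> Prop) (k l p : nat)
    (c : seq (seq nat) -> nat) :
  infinite_set M ->
  (forall F, plegma M k l F -> c F < p) ->
  exists L : nat -> Prop, exists j0 : nat,
    infinite_set L /\ subset_of L M /\ j0 < p /\
    (forall F, plegma L k l F -> c F = j0).
Proof.
move=> M_inf c_lt.
pose c_set u := c (plegma_of_set k l u).
have c_set_lt u : in_ksubsets M (k * l) u -> c_set u < p.
  by move=> u_ks; apply/c_lt/plegma_of_set_plegma.
have [L [j0 [L_inf [L_sub [lt_j0p L_hom]]]]] := ramsey M_inf c_set_lt.
exists L, j0; split=> //; split=> //; split=> // F F_plegma.
by rewrite -(set_of_plegmaK F_plegma); apply/L_hom/set_of_plegma_ksubset.
Qed.
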